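(* Let $\delta=x^{\mathbf d}f(\theta)$ be a homogeneous differential operator of degree $\mathbf d$ with $\mathbf d\neq\mathbf 0$ and $-\mathbf d\in S$. Let $\mathcal B\subseteq\mathbb N^n$ be compatible with $\mathbf d$ and such that $\delta$ fixes the ideal $I_{\mathcal B}=(x^{\mathbf a}\mid\mathbf a\in V'_{\mathrm{mon}}(f)\cap W_{\mathcal B})$. Then for every $\mathcal B'\subseteq\mathbb N^n$ compatible with $\mathbf d$ with $W_{\mathcal B'}\subseteq W_{\mathcal B}$, the ideal $I_{\mathcal B'}=(x^{\mathbf a}\mid\mathbf a\in V'_{\mathrm{mon}}(f)\cap W_{\mathcal B'})$ is $\delta$-fixed.
   Context: Standing notation. Fix $d\ge 1$. Let $\sigma\subseteq\mathbb R^d$ be a full-dimensional, strongly convex rational polyhedral cone, so $\sigma^\vee$ is full-dimensional and strongly convex. $S=\sigma^\vee\cap\mathbb Z^d$, $R=\mathbb C[S]$ with monomial basis $x^{\mathbf a}$, $\mathbf a\in S$. $h_1,\dots,h_n$ are the primitive support functions of the facets of $\sigma^\vee$, so $S=\{\mathbf a\in\mathbb Z^d:h_i(\mathbf a)\ge0\ \forall i\}$. $(g,m)!=\prod_{j=0}^m(g-j)$ for $m\ge0$, $=1$ for $m<0$; $H_{\mathbf d}=\prod_i(h_i,h_i(-\mathbf d)-1)!$. For $f$ divisible by $H_{\mathbf d}$, $\delta=x^{\mathbf d}f(\theta)$ acts by $\delta(x^{\mathbf a})=f(\mathbf a)x^{\mathbf a+\mathbf d}$. $I$ is $\delta$-fixed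 if $\delta(I)=I$. $V_{\mathrm{mon}}(f)=\{\mathbf a\in\mathbb Z^d:f(\mathbf a)=0\}$. Write $\mathbf d=q\mathbf e$ with $q\in\mathbb Z_{\ge1}$, $\mathbf e$ primitive. For $\mathbf a\in\mathbb Z^d$, $\operatorname{val}(\mathbf a)=\inf\{t\in\mathbb R:\mathbf a+t\mathbf d\in V_{\mathrm{mon}}(f)\}\in\mathbb R\cup\{\pm\infty\}$ ($\inf\emptyset=+\infty$). When $\operatorname{val}(\mathbf a)$ is finite, $\operatorname{pval}(\mathbf a)=\max\{t\in[\operatorname{val}(\mathbf a),\operatorname{val}(\mathbf a)+1):\mathbf a+t\mathbf d\in V_{\mathrm{mon}}(f)\}$ and $\operatorname{vpt}(\mathbf a)=\mathbf a+\operatorname{pval}(\mathbf a)\mathbf d$. $V'_{\mathrm{mon}}(f)=\{\operatorname{vpt}(\mathbf a):\mathbf a\in\mathbb Z^d,\ \operatorname{val}(\mathbf a)\text{ finite}\}$. A tuple $\beta\in\mathbb N^n$ is compatible with $\mathbf d$ if for every $i$, $\beta_i=0$ or $h_i(\mathbf d)=0$; $\mathcal B\subseteq\mathbb N^n$ is compatible with $\mathbf d$ if each element is. $W_\beta=\{\mathbf a\in S: h_i(\mathbf a)\ge\beta_i\ \forall i\}$, $W_{\mathcal B}=\bigcup_{\beta\in\mathcal B}W_\beta$. *)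

From HB Require Import structures.
From mathcomp Require Import all_boot all_order all_algebra.
From mathcomp Require Import complex.
From mathcomp Require Import Rstruct.
From mathcomp Require Import mpoly.
From Stdlib Require Import Rdefinitions.
Set Implicit Arguments. Unset Strict Implicit. Unset Printing Implicit Defensive.
Import Order.TTheory GRing.Theory Num.Theory.
Local Open Scope ring_scope.

Notation RR := Rdefinitions.R.
Definition CC : Type := RR[i].

Definition vec (d : nat) := 'rV[int]_d.

Definition hval d (u a : vec d) : int := \sum_(j < d) u 0 j * a 0 j.

Definition primitive_vec d (u : vec d) : Prop :=
  forall k : int, (forall j, u 0 j \in dvdz k) -> `|k| = 1.

(* h_1..h_n are exactly the primitive inner normals (support functions) of the
   facets of the cone sigma^vee = {x in R^d | h_i(x) >= 0 for all i}, where
   sigma^vee is full-dimensional and strongly convex (equivalently sigma is a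
   full-dimensional strongly convex rational polyhedral cone). *)
Definition dual_cone_facets d n (h : 'I_n -> vec d) : Prop :=
  [/\ (forall i, primitive_vec (h i)),
      (* sigma^vee full-dimensional: it has an interior point *)
      (exists a : vec d, forall i, 0 < hval (h i) a),
      (* sigma^vee strongly convex: contains no line *)
      (forall a : vec d, (forall i, hval (h i) a = 0) -> a = 0) &
      (* each h_i = 0 cuts out a facet (relative interior point avoiding the others) *)
      (forall i, exists a : vec d,
           hval (h i) a = 0 /\ forall j, j != i -> 0 < hval (h j) a)].

Definition inS d n (h : 'I_n -> vec d) (a : vec d) : Prop :=
  forall i, 0 <= hval (h i) a.

(* Elements of R = C[S]: finitely supported coefficient functions
   c : Z^d -> C with support in S  (c represents sum_a c(a) x^a). *)
Definition inCS d n (h : 'I_n -> vec d) (c : vec d -> CC) : Prop :=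
  (exists s : seq (vec d), forall a, c a != 0 -> a \in s) /\
  (forall a, c a != 0 -> inS h a).

(* c * x^a, as a coefficient function *)
Definition mul_monomial d (c : vec d -> CC) (a : vec d) : vec d -> CC :=
  fun b => c (b - a).

Definition monideal d n (h : 'I_n -> vec d) (A : vec d -> Prop)
  (c : vec d -> CC) : Prop :=
  exists (k : nat) (r : 'I_k -> vec d -> CC) (g : 'I_k -> vec d),
    [/\ (forall l, inCS h (r l)), (forall l, A (g l)) &
        forall b, c b = \sum_(l < k) mul_monomial (r l) (g l) b].

Definition eval_int d (f : {mpoly CC[d]}) (a : vec d) : CC :=
  f.@[fun j => ((a 0 j)%:~R : CC)].

(* delta = x^dd f(theta):  delta(x^a) = f(a) x^(a+dd), extended linearly *)
Definition delta d (f : {mpoly CC[d]}) (dd : vec d) (c : vec d -> CC)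
  : vec d -> CC :=
  fun b => eval_int f (b - dd) * c (b - dd).

Definition delta_fixed d (f : {mpoly CC[d]}) (dd : vec d)
  (I : (vec d -> CC) -> Prop) : Prop :=
  (forall c, I c -> I (delta f dd c)) /\
  (forall c, I c -> exists c', I c' /\ forall b, delta f dd c' b = c b).

Definition hpoly d (u : vec d) : {mpoly CC[d]} :=
  \sum_(j < d) ((u 0 j)%:~R : CC) *: 'X_j.

Definition ffact_poly d (g : {mpoly CC[d]}) (m : int) : {mpoly CC[d]} :=
  match m with
  | Posz k => \prod_(j < k.+1) (g - (j%:R : CC)%:MP)
  | Negz _ => 1
  end.

Definition Hpoly d n (h : 'I_n -> vec d) (dd : vec d) : {mpoly CC[d]} :=
  \prod_(i < n) ffact_poly (hpoly (h i)) (hval (h i) (- dd) - 1).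

Definition divisible_by_H d n (h : 'I_n -> vec d) (dd : vec d)
  (f : {mpoly CC[d]}) : Prop :=
  exists g : {mpoly CC[d]}, f = Hpoly h dd * g.

Definition Vmon d (f : {mpoly CC[d]}) (a : vec d) : Prop := eval_int f a = 0.

Definition Tset d (f : {mpoly CC[d]}) (dd a : vec d) (t : RR) : Prop :=
  exists b : vec d,
    (forall j, (a 0 j)%:~R + t * (dd 0 j)%:~R = (b 0 j)%:~R :> RR) /\ Vmon f b.

Definition is_inf (T : RR -> Prop) (v : RR) : Prop :=
  (forall t, T t -> v <= t) /\
  (forall e : RR, 0 < e -> exists t, T t /\ t < v + e).

Definition is_pval (T : RR -> Prop) (v p : RR) : Prop :=
  [/\ T p, v <= p < v + 1 & forall t, T t -> v <= t < v + 1 -> t <= p].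

Definition Vprime d (f : {mpoly CC[d]}) (dd : vec d) (b : vec d) : Prop :=
  exists (a : vec d) (v p : RR),
    [/\ is_inf (Tset f dd a) v, is_pval (Tset f dd a) v p &
        forall j, (b 0 j)%:~R = (a 0 j)%:~R + p * (dd 0 j)%:~R :> RR].

Definition compatible d n (h : 'I_n -> vec d) (dd : vec d) (beta : 'I_n -> nat)
  : Prop := forall i, beta i = 0%N \/ hval (h i) dd = 0.

Definition compatibleB d n (h : 'I_n -> vec d) (dd : vec d)
  (B : ('I_n -> nat) -> Prop) : Prop :=
  forall beta, B beta -> compatible h dd beta.

Definition Wbeta d n (h : 'I_n -> vec d) (beta : 'I_n -> nat) (a : vec d) : Prop :=
  inS h a /\ forall i, (beta i)%:Z <= hval (h i) a.

Definition WB d n (h : 'I_n -> vec d) (B : ('I_n -> nat) -> Prop) (a : vec d)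
  : Prop := exists beta, B beta /\ Wbeta h beta a.

Definition IB d n (h : 'I_n -> vec d) (f : {mpoly CC[d]}) (dd : vec d)
  (B : ('I_n -> nat) -> Prop) : (vec d -> CC) -> Prop :=
  monideal h (fun a => Vprime f dd a /\ WB h B a).

From HB Require Import structures.
From mathcomp Require Import all_boot all_order all_algebra.
From mathcomp Require Import complex.
From mathcomp Require Import Rstruct.
From mathcomp Require Import mpoly.
From mathcomp Require Import lra ring zify.
From Stdlib Require Import Classical.
Import Order.TTheory GRing.Theory Num.Theory.
Local Open Scope ring_scope.
Set Implicit Arguments. Unset Strict Implicit. Unset Printing Implicit Defensive.

(* Proof strategy.
   1. A monomial ideal (x^a | a in A) of R = C[S] consists exactly of the
      finitely supported c whose support lies in A + S (the "monomial
      support" of A).  Since delta maps x^a to f(a) x^(a+d), the ideal is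
      delta-fixed iff its monomial support M satisfies
        (i)  a in M, f(a) <> 0  ->  a + d in M      (delta(I) <= I), and
        (ii) a in M             ->  f(a - d) <> 0   (I <= delta(I)).
   2. Valuation points.  If M <= S is closed under adding S, satisfies
      (i),(ii), and h_i(d) < 0 for some facet, then for every a in M with
      f(a) <> 0 the lattice points a + t d of M form a discrete set bounded
      above by some tau >= 1; f has no zero on the line at t <= tau - 1 and
      vanishes at every lattice point with tau - 1 < t <= tau, so val(a) is
      the least such t, pval(a) = tau, and vpt(a) = a + tau d lies in M.
   3. For B' compatible with d, vpt(a) keeps the W_beta-bounds of a (along
      facets with h_i(d) = 0 nothing moves), and a + d = vpt(a) + (tau-1)(-d)
      lies in vpt(a) + S.  Hence the support of I_B' satisfies (i); it
      satisfies (ii) because it is contained in the support of I_B. *)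

Section Semigroup.
Variables (d n : nat) (h : 'I_n -> vec d).

Lemma hvalD (u a b : vec d) : hval u (a + b) = hval u a + hval u b.
Proof. by rewrite /hval -big_split; apply: eq_bigr => j _; rewrite !mxE mulrDr. Qed.

Lemma hvalN (u a : vec d) : hval u (- a) = - hval u a.
Proof. by rewrite /hval -sumrN; apply: eq_bigr => j _; rewrite !mxE mulrN. Qed.

Lemma hvalB (u a b : vec d) : hval u (a - b) = hval u a - hval u b.
Proof. by rewrite hvalD hvalN. Qed.

Lemma inSD a b : inS h a -> inS h b -> inS h (a + b).
Proof. by move=> Ha Hb i; rewrite hvalD addr_ge0. Qed.

Lemma WbetaD beta a b : Wbeta h beta a -> inS h b -> Wbeta h beta (a + b).
Proof.
move=> [Sa Wa] Sb; split; first exact: inSD.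
by move=> i; rewrite hvalD; apply: le_trans (Wa i) _; rewrite lerDl.
Qed.

(* A strongly convex cone sigma^vee meets the line through d only at 0, so a
   nonzero d with -d in S strictly decreases some support function. *)
Lemma descending_facet dd :
  (forall a : vec d, (forall i, hval (h i) a = 0) -> a = 0) ->
  dd != 0 -> inS h (- dd) -> exists i, hval (h i) dd < 0.
Proof.
move=> convex dd0 Hdd.
case: (pickP (fun i => hval (h i) dd < 0)) => [i Hi|none]; first by exists i.
case/eqP: dd0; apply: convex => i.
have := Hdd i; rewrite hvalN oppr_ge0 => le.
by apply/eqP; rewrite eq_le le /= leNgt none.
Qed.

End Semigroup.

Lemma nonzero_entry d (a : vec d) : a != 0 -> exists j, a 0 j != 0.
Proof.
move=> a0; case: (pickP (fun j => a 0 j != 0)) => [j Hj|none]; first by exists j.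
case/eqP: a0; apply/matrixP => i j; rewrite (ord1 i) mxE.
by move/negbFE/eqP: (none j).
Qed.

Section MonomialIdeals.
Variables (d n : nat) (h : 'I_n -> vec d).

Definition monsupp (A : vec d -> Prop) (x : vec d) : Prop :=
  exists g, A g /\ inS h (x - g).

Lemma monsuppD A x y : monsupp A x -> inS h y -> monsupp A (x + y).
Proof. by move=> [g [Ag S]] Sy; exists g; split => //; rewrite addrAC; apply: inSD. Qed.

Lemma monideal0 A : monideal h A (fun _ => 0).
Proof.
exists 0%N, (fun _ _ => 0), (fun _ => 0); split; last by move=> b; rewrite big_ord0.
- by move=> l; split; [exists [::] | ] => a; rewrite eqxx.
- by case.
Qed.

Lemma monideal_monomial A b (c : CC) : monsupp A b ->
  monideal h A (fun x => if x == b then c else 0).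
Proof.
move=> [g [Ag Sbg]].
exists 1%N, (fun _ y => if y == b - g then c else 0), (fun _ => g); split => //.
- move=> l; split.
    by exists [:: b - g] => y; case: (y =P b - g) => [->|]; rewrite ?mem_seq1 ?eqxx.
  by move=> y; case: (y =P b - g) => [->|] //; rewrite eqxx.
- move=> x; rewrite big_ord1 /mul_monomial.
  case: (x =P b) => [->|ne]; rewrite ?eqxx //.
  by case: eqP => // /(congr1 (+%R^~ g)); rewrite !subrK.
Qed.

Lemma monidealD A c1 c2 c : monideal h A c1 -> monideal h A c2 ->
  (forall b, c b = c1 b + c2 b) -> monideal h A c.
Proof.
move=> [k1 [r1 [g1 [H1 H2 H3]]]] [k2 [r2 [g2 [K1 K2 K3]]]] E.
exists (k1 + k2)%N,
  (fun l => match split l with inl i => r1 i | inr i => r2 i end),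
  (fun l => match split l with inl i => g1 i | inr i => g2 i end); split.
- by move=> l; case: (split l).
- by move=> l; case: (split l).
- move=> b; rewrite E H3 K3 big_split_ord /=; congr (_ + _); apply: eq_bigr => i _.
  + by rewrite (unsplitK (inl _ i)).
  + by rewrite (unsplitK (inr _ i)).
Qed.

Lemma monideal_of_support A (s : seq (vec d)) c :
  (forall x, c x != 0 -> x \in s) -> (forall x, c x != 0 -> monsupp A x) ->
  monideal h A c.
Proof.
elim: s c => [|x0 s IH] c Hs HM.
  have [k [r [g [H1 H2 H3]]]] := monideal0 A.
  exists k, r, g; split => // b; rewrite -H3; apply/eqP.
  by apply: contraT => /Hs.
apply: (@monidealD A (fun y => if y == x0 then c x0 else 0)
                     (fun y => if y == x0 then 0 else c y)).
- case: (eqVneq (c x0) 0) => [->|nz]; last exact: monideal_monomial (HM _ nz).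
  by have [k [r [g [H1 H2 H3]]]] := monideal0 A; exists k, r, g; split => // b; case: eqP.
- apply: IH => x; case: (x =P x0) => [_|ne nz]; rewrite ?eqxx //; last exact: HM.
  by move: (Hs _ nz); rewrite inE; case: (x =P x0).
- by move=> b; case: eqP => [->|_]; rewrite ?addr0 ?add0r.
Qed.

Lemma monideal_supp A c x : monideal h A c -> c x != 0 -> monsupp A x.
Proof.
move=> [k [r [g [H1 H2 H3]]]]; rewrite H3 => nz.
case: (pickP (fun l => r l (x - g l) != 0)) => [l Hl | H0].
  by exists (g l); split => //; apply: (proj2 (H1 l)).
by move: nz; rewrite big1 ?eqxx // => l _; move/negbFE/eqP: (H0 l).
Qed.

Lemma monideal_finite A c : monideal h A c ->
  exists s : seq (vec d), forall x, c x != 0 -> x \in s.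
Proof.
move=> [k [r [g [H1 H2 H3]]]].
have [sf Hsf] : exists sf : 'I_k -> seq (vec d), forall l x, r l x != 0 -> x \in sf l.
  exact: (@fin_all_exists 'I_k (fun _ => seq (vec d))
            (fun l s => forall x, r l x != 0 -> x \in s) (fun l => proj1 (H1 l))).
exists [seq y + g l | l <- enum 'I_k, y <- sf l] => x; rewrite H3 => nz.
case: (pickP (fun l => r l (x - g l) != 0)) => [l Hl | H0].
  by have := allpairs_f_dep (fun l y => y + g l) (mem_enum predT l) (Hsf l _ Hl); rewrite subrK.
by move: nz; rewrite big1 ?eqxx // => l _; move/negbFE/eqP: (H0 l).
Qed.

End MonomialIdeals.

(* delta-fixedness of a monomial ideal, read off its monomial support M:
   delta moves x^a to a nonzero multiple of x^(a+d) exactly when f(a) <> 0. *)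
Definition shift_stable d (f : {mpoly CC[d]}) (dd : vec d) (M : vec d -> Prop) :=
  (forall x, M x -> eval_int f x != 0 -> M (x + dd)) /\
  (forall x, M x -> eval_int f (x - dd) != 0).

Section DeltaMonomial.
Variables (d n : nat) (h : 'I_n -> vec d) (dd : vec d) (f : {mpoly CC[d]}).
Variable A : vec d -> Prop.

Lemma delta_fixed_shift_stable :
  delta_fixed f dd (monideal h A) -> shift_stable f dd (monsupp h A).
Proof.
move=> [Hsub Hsup]; split => x Mx.
  move=> fx; apply: (monideal_supp (Hsub _ (monideal_monomial 1 Mx))).
  by rewrite /delta addrK eqxx mulr1.
have [c' [_ Hc']] := Hsup _ (monideal_monomial 1 Mx).
have := Hc' x; rewrite eqxx /delta; case: eqP => // ->.
by rewrite mul0r => /eqP; rewrite eq_sym oner_eq0.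
Qed.

Lemma shift_stable_delta_fixed : inS h (- dd) ->
  shift_stable f dd (monsupp h A) -> delta_fixed f dd (monideal h A).
Proof.
move=> Hdd [Mup Mback]; split => c Ic; have [s Hs] := monideal_finite Ic.
  apply: (@monideal_of_support _ _ h A [seq y + dd | y <- s]) => x;
    rewrite /delta mulf_eq0 negb_or => /andP [nf nc].
    by rewrite -(subrK dd x); apply: map_f; apply: Hs.
  by have := Mup _ (monideal_supp Ic nc) nf; rewrite subrK.
exists (fun y => c (y + dd) / eval_int f y); split.
  apply: (@monideal_of_support _ _ h A [seq y - dd | y <- s]) => x;
    rewrite mulf_eq0 negb_or => /andP [nc _].
    by rewrite -(addrK dd x); apply: map_f; apply: Hs.
  by have := monsuppD (monideal_supp Ic nc) Hdd; rewrite addrK.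
move=> b; rewrite /delta subrK.
case: (eqVneq (c b) 0) => [->|nz]; first by rewrite mul0r mulr0.
by rewrite mulrC divfK //; apply: Mback; apply: monideal_supp Ic nz.
Qed.

End DeltaMonomial.

Section Line.
Variables (d : nat) (dd : vec d).

Definition onl (b : vec d) (t : RR) (c : vec d) : Prop :=
  forall j, (b 0 j)%:~R + t * (dd 0 j)%:~R = (c 0 j)%:~R :> RR.

Lemma onl_hval u b t c : onl b t c ->
  (hval u c)%:~R = (hval u b)%:~R + t * (hval u dd)%:~R :> RR.
Proof.
move=> H; rewrite /hval !rmorph_sum mulr_sumr -big_split; apply: eq_bigr => j _ /=.
by rewrite !intrM -H; ring.
Qed.

Lemma onl0 b : onl b 0 b.
Proof. by move=> j; rewrite mul0r addr0. Qed.

Lemma onl_add1 b t c : onl b t c -> onl b (t + 1) (c + dd).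
Proof. by move=> H j; rewrite mxE intrD -H; ring. Qed.

Lemma onl_sub1 b t c : onl b t c -> onl b (t - 1) (c - dd).
Proof. by move=> H j; rewrite !mxE intrB -H; ring. Qed.

Lemma onl_teq b t s c : onl b t c -> t = s -> onl b s c.
Proof. by move=> H <-. Qed.

Lemma onl_down n (h : 'I_n -> vec d) b t s c c' : inS h (- dd) ->
  onl b t c -> onl b s c' -> s <= t -> inS h (c' - c).
Proof.
move=> Hdd H H' st i; rewrite hvalB -(ler_int RR) intrB (onl_hval _ H) (onl_hval _ H').
have : 0 <= (hval (h i) (- dd))%:~R :> RR by rewrite ler0z; apply: Hdd.
by rewrite hvalN intrN; nra.
Qed.

End Line.

(* Along a facet with h_i(d) = 0 a point of the line keeps its h_i-value, so
   a lattice point of S on the line through a in W_beta stays in W_beta when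
   beta is compatible with d. *)
Lemma Wbeta_onl d n (h : 'I_n -> vec d) dd beta b t c :
  compatible h dd beta -> Wbeta h beta b -> inS h c -> onl dd b t c ->
  Wbeta h beta c.
Proof.
move=> comp [_ Wb] Sc Hc; split => // i.
case: (comp i) => [->|hz]; first exact: Sc.
have := onl_hval (h i) Hc; rewrite hz mulr0 addr0 => /intr_inj ->; exact: Wb.
Qed.

Lemma nat_max (P : nat -> Prop) K : P 0%N -> (forall k, P k -> (k <= K)%N) ->
  exists k, P k /\ forall k', P k' -> (k' <= k)%N.
Proof.
elim: K => [|K IH] P0 Hb; first by exists 0%N; split => // k' /Hb.
case: (classic (P K.+1)) => [PK|nPK]; first by exists K.+1; split => // k' /Hb.
apply: IH => // k Pk; have := Hb _ Pk; rewrite leq_eqVlt; case/orP => [/eqP E|//].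
by move: Pk; rewrite E.
Qed.

Lemma int_max (P : int -> Prop) (z0 U : int) : P z0 -> (forall z, P z -> z <= U) ->
  exists zm, P zm /\ forall z, P z -> z <= zm.
Proof.
move=> P0 HU.
have [k [Pk kmax]] : exists k, P (z0 + k%:Z) /\ forall k', P (z0 + k'%:Z) -> (k' <= k)%N.
  apply: (nat_max (K := absz (U - z0))); first by rewrite addr0.
  by move=> k /HU; lia.
exists (z0 + k%:Z); split => // z Pz.
case: (lerP z z0) => [zz0|z0z]; first by apply: le_trans zz0 _; rewrite lerDl.
have := kmax (absz (z - z0)); rewrite abszE gtr0_norm ?subr_gt0 // addrCA subrr addr0 => /(_ Pz).
by lia.
Qed.

Lemma int_min (P : int -> Prop) (z0 L : int) : P z0 -> (forall z, P z -> L <= z) ->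
  exists zm, P zm /\ forall z, P z -> zm <= z.
Proof.
move=> P0 HL.
have [zm [Pzm zmax]] := @int_max (fun z => P (- z)) (- z0) (- L)
  ltac:(by rewrite /= opprK) ltac:(by move=> z /HL; rewrite lerNr).
by exists (- zm); split => // z Pz; rewrite lerNl; apply: zmax; rewrite opprK.
Qed.

Section ValuationPoint.
Variables (d n : nat) (h : 'I_n -> vec d) (dd : vec d) (f : {mpoly CC[d]}).
Variable M : vec d -> Prop.
Variables (i0 : 'I_n) (j0 : 'I_d).
Hypotheses (Hdd : inS h (- dd)) (Hi0 : hval (h i0) dd < 0) (Hj0 : dd 0 j0 != 0).
Hypotheses (M_in_S : forall x, M x -> inS h x)
  (M_up : forall x y, M x -> inS h y -> M (x + y))
  (M_stable : shift_stable f dd M).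

(* Lattice points on a line b + t d (b a lattice point) occur only at
   parameters t in (1/N) Z, where N = d_(j0)^2 > 0; lvl z is the parameter z/N. *)
Let N : int := dd 0 j0 * dd 0 j0.
Let lvl (z : int) : RR := z%:~R / N%:~R.

Lemma N_gt0 : (0 : RR) < N%:~R.
Proof. by rewrite ltr0z /N -expr2 exprn_even_gt0 //= Hj0. Qed.

Lemma lvl_le z w : (lvl z <= lvl w) = (z <= w).
Proof. by rewrite /lvl ler_pM2r ?invr_gt0 ?N_gt0 // ler_int. Qed.

Lemma lvlB1 z : lvl (z - N) = lvl z - 1.
Proof. by rewrite /lvl intrB mulrBl divff // gt_eqF // N_gt0. Qed.

Lemma lvlMN z : lvl (z * N) = z%:~R.
Proof. by rewrite /lvl intrM mulfK // gt_eqF // N_gt0. Qed.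

Lemma onl_level b t c : onl dd b t c -> exists z, t = lvl z.
Proof.
move=> H; exists ((c 0 j0 - b 0 j0) * dd 0 j0).
rewrite /lvl /N !intrM intrB -(H j0); field.
by rewrite intr_eq0.
Qed.

Lemma M_onl_down b t s c c' : onl dd b t c -> onl dd b s c' -> s <= t -> M c -> M c'.
Proof.
by move=> H H' st /M_up /(_ (onl_down Hdd H H' st)); rewrite addrC subrK.
Qed.

(* The points of M on the line through b have a largest parameter, since
   h_(i0) decreases along d and is nonnegative on M. *)
Lemma top_level b : M b -> exists zt c, [/\ onl dd b (lvl zt) c, M c &
  forall t c', onl dd b t c' -> M c' -> t <= lvl zt].
Proof.
move=> Mb; pose P z := exists c, onl dd b (lvl z) c /\ M c.
have P0 : P 0 by exists b; split => //; apply: onl_teq (onl0 dd b) _; rewrite /lvl mul0r.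
have bound : forall z, P z -> z <= hval (h i0) b * N.
  move=> z [c [Hc Mc]]; rewrite -lvl_le lvlMN.
  have Sc : 0 <= (hval (h i0) c)%:~R :> RR by rewrite ler0z; apply: M_in_S.
  have Sb : 0 <= (hval (h i0) b)%:~R :> RR by rewrite ler0z; apply: M_in_S.
  have hd1 : (hval (h i0) dd + 1)%:~R <= 0 :> RR by rewrite lerz0; lia.
  move: hd1 (onl_hval (h i0) Hc); rewrite intrD; nra.
have [zt [[c [Hc Mc]] zmax]] := int_max P0 bound.
exists zt, c; split => // t c' Hc' Mc'.
by have [z Ez] := onl_level Hc'; rewrite Ez lvl_le; apply: zmax; exists c'; rewrite -Ez.
Qed.

Section Top.
Variables (b : vec d) (zt : int) (ct : vec d).
Hypotheses (Hct : onl dd b (lvl zt) ct) (Mct : M ct)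
  (top_max : forall t c, onl dd b t c -> M c -> t <= lvl zt).

(* b itself has f(b) <> 0, so b + d lies in M and the top parameter is >= 1. *)
Lemma top_ge1 : M b -> eval_int f b != 0 -> 1 <= lvl zt.
Proof.
move=> Mb fb; apply: (top_max (c := b + dd)); last exact: (proj1 M_stable).
exact: onl_teq (onl_add1 (onl0 dd b)) (add0r 1).
Qed.

Lemma onl_below_top t c : onl dd b t c -> t <= lvl zt -> M c.
Proof. by move=> Hc le; apply: M_onl_down Hct Hc le Mct. Qed.

Lemma near_top_zero t c : onl dd b t c -> lvl zt - 1 < t <= lvl zt -> eval_int f c = 0.
Proof.
move=> Hc /andP [lo hi]; apply/eqP; apply: contraT => nz.
have := top_max (onl_add1 Hc) ((proj1 M_stable) _ (onl_below_top Hc hi) nz); lra.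
Qed.

Lemma far_below_nonzero t c : onl dd b t c -> t <= lvl zt - 1 -> eval_int f c != 0.
Proof.
move=> Hc le; have := (proj2 M_stable) _ (onl_below_top (onl_add1 Hc) ltac:(lra)).
by rewrite addrK.
Qed.

Lemma bottom_level : exists zv c, [/\ onl dd b (lvl zv) c,
  lvl zt - 1 < lvl zv <= lvl zt &
  forall t c', onl dd b t c' -> lvl zt - 1 < t -> lvl zv <= t].
Proof.
pose Q z := lvl zt - 1 < lvl z /\ exists c, onl dd b (lvl z) c.
have Qzt : Q zt by split; [lra | exists ct].
have low : forall z, Q z -> zt - N <= z by move=> z [lo _]; rewrite -lvl_le lvlB1 ltW.
have [zv [[lo [c Hc]] zmin]] := int_min Qzt low.
exists zv, c; split => //; first by rewrite lo lvl_le zmin.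
move=> t c' Hc' lt; have [z Ez] := onl_level Hc'.
by rewrite Ez lvl_le; apply: zmin; split; [rewrite -Ez | exists c'; rewrite -Ez].
Qed.

Lemma top_is_pval : exists v, is_inf (Tset f dd b) v /\ is_pval (Tset f dd b) v (lvl zt).
Proof.
have [zv [cv [Hcv /andP [lo hi] vmin]]] := bottom_level.
have zeros_high : forall t, Tset f dd b t -> lvl zt - 1 < t.
  move=> t [c [Hc Vc]]; rewrite ltNge; apply/negP => le.
  by move: (far_below_nonzero Hc le); rewrite Vc eqxx.
exists (lvl zv); split; split.
- by move=> t Tt; have [c [Hc _]] := Tt; apply: vmin Hc (zeros_high _ Tt).
- move=> e e0; exists (lvl zv); split; last lra.
  by exists cv; split => //; apply: near_top_zero Hcv _; rewrite lo hi.
- exists ct; split => //; apply: near_top_zero Hct _.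
  by rewrite lexx andbT; lra.
- by rewrite hi /=; lra.
- move=> t Tt /andP [vt tv1]; rewrite leNgt; apply/negP => gt.
  have [c [Hc _]] := Tt; have := vmin _ _ (onl_sub1 Hc) ltac:(lra); lra.
Qed.

End Top.

Lemma valuation_point b : M b -> eval_int f b != 0 ->
  exists (v tau : RR) (c : vec d), [/\ is_inf (Tset f dd b) v,
    is_pval (Tset f dd b) v tau, onl dd b tau c, 1 <= tau & M c].
Proof.
move=> Mb fb; have [zt [c [Hc Mc top_max]]] := top_level Mb.
have [v [Hinf Hpval]] := top_is_pval Hc Mc top_max.
by exists v, (lvl zt), c; split => //; apply: top_ge1 top_max Mb fb.
Qed.

End ValuationPoint.

Definition IBgens d n (h : 'I_n -> vec d) (f : {mpoly CC[d]}) (dd : vec d)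
  (B : ('I_n -> nat) -> Prop) (a : vec d) : Prop := Vprime f dd a /\ WB h B a.

Lemma IBgens_inS d n (h : 'I_n -> vec d) f dd B x :
  monsupp h (IBgens h f dd B) x -> inS h x.
Proof.
move=> [g [[_ [beta [_ [Sg _]]]] Sxg]].
by have := inSD Sg Sxg; rewrite addrC subrK.
Qed.

(* Shift stability passes from the support of I_B to that of I_B' when
   W_B' <= W_B and B' is compatible with d: for a point x of the smaller
   support with f(x) <> 0, the valuation point vpt(x) is a generator of I_B'
   and x + d lies above it. *)
Lemma shift_stable_subfamily d n (h : 'I_n -> vec d) (dd : vec d)
  (f : {mpoly CC[d]}) (B B' : ('I_n -> nat) -> Prop) (i0 : 'I_n) (j0 : 'I_d) :
  inS h (- dd) -> hval (h i0) dd < 0 -> dd 0 j0 != 0 ->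
  compatibleB h dd B' -> (forall a, WB h B' a -> WB h B a) ->
  shift_stable f dd (monsupp h (IBgens h f dd B)) ->
  shift_stable f dd (monsupp h (IBgens h f dd B')).
Proof.
move=> Hdd Hi0 Hj0 compB' WB'B [Mup Mback].
have sub x : monsupp h (IBgens h f dd B') x -> monsupp h (IBgens h f dd B) x.
  by move=> [g [[Vg Wg] Sg]]; exists g; split => //; split => //; apply: WB'B.
split; last by move=> x /sub; apply: Mback.
move=> x Mx' fx.
have [v [tau [c [Hinf Hpval Hc tau1 Mc]]]] := valuation_point Hdd Hi0 Hj0
  (@IBgens_inS _ _ h f dd B) (@monsuppD _ _ h _) (conj Mup Mback) (sub _ Mx') fx.
have [g [[_ [beta [Bb Wg]]] Sxg]] := Mx'.
exists c; split; first split.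
- by exists x, v, tau; split => // j; rewrite -Hc.
- exists beta; split => //; apply: Wbeta_onl (compB' _ Bb) _ (IBgens_inS Mc) Hc.
  by have := WbetaD Wg Sxg; rewrite addrC subrK.
- exact: onl_down Hdd Hc (onl_teq (onl_add1 (onl0 dd x)) (add0r 1)) tau1.
Qed.

Theorem mainTheorem12 (d n : nat) (h : 'I_n -> vec d) (dd : vec d)
  (f : {mpoly CC[d]}) (B : ('I_n -> nat) -> Prop) :
  (0 < d)%N ->
  dual_cone_facets h ->
  divisible_by_H h dd f ->
  dd != 0 ->
  inS h (- dd) ->
  compatibleB h dd B ->
  delta_fixed f dd (IB h f dd B) ->
  forall B' : ('I_n -> nat) -> Prop,
    compatibleB h dd B' ->
    (forall a, WB h B' a -> WB h B a) ->
    delta_fixed f dd (IB h f dd B').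
Proof.
move=> _ [_ _ convex _] _ dd0 Hdd _ fixedB B' compB' WB'B.
have [i0 Hi0] := descending_facet convex dd0 Hdd.
have [j0 Hj0] := nonzero_entry dd0.
apply: (shift_stable_delta_fixed Hdd).
apply: (shift_stable_subfamily Hdd Hi0 Hj0 compB' WB'B).
exact: delta_fixed_shift_stable fixedB.
Qed.
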